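(* In the setting described in the context, the mapping $\psi^b$ is a monotone $(1-\min\{2\beta,1/2\})$-CRS with regards to $h$.
   Context: Let $I=\{1,\dots,n\}$ be a set of items, $B$ a positive integer, $[B]=\{1,\dots,B\}$, $[0;B]=\{0,1,\dots,B\}$; for $u,w\in[0;B]^I$, $u\le w$ means coordinatewise. Let $f:[0;B]^I\to\mathbb{R}_{\ge0}$ be monotone and lattice submodular. Each item $i$ has a random state $\Phi(i)\in[B]$, independent across items, with known distribution $p_i(s)=\Pr[\Phi(i)=s]$. Item $i$ in state $s$ has a nonnegative integer cost $c_i(s)$, with $c_i(s)\ge c_i(s')$ whenever $s\ge s'$. $C$ is a positive integer budget and $\mathcal{I}^{out}\subseteq 2^I$ is a downward-closed family. For $S\subseteq I$ and a realization $\phi\in[B]^I$, $\phi_S\in[0;B]^I$ equals $\phi(i)$ for $i\in S$ and $0$ otherwise; $\overline{f}(S)=\mathbb{E}[f(\Phi_S)]$, and $F(\overline{x})=\sum_{U\subseteq I}\prod_{i\in U}\overline{x}(i)\prod_{i\notin U}(1-\overline{x}(i))\overline{f}(U)$. Let $P_{\mathcal{I}^{out}}=\mathrm{conv}\{\mathbf{1}_S: S\in\mathcal{I}^{out}\}$. A monotone $(\beta,\gamma)$-balanced CRS for $\mathcal{I}^{out}$ is a (possibly randomized) scheme that, for any $\overline{z}\in\beta\cdot P_{\mathcal{I}^{out}}$ and the random set $R$ containing each $i$ independently with probability $\overline{z}(i)$, maps $R$ to $\chi(R)\subseteq R$ with $\chi(R)\in\mathcal{I}^{out}$, such that $\Pr[i\in\chi(R)\mid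 i\in R]\ge\gamma$ for all $i$, and for $i\in R\subseteq R'$, $\Pr[i\in\chi(R)]\ge\Pr[i\in\chi(R')]$. Assume such a scheme exists for given $\beta,\gamma\in[0,1]$. Problem P1: variables $x(i,t)\ge0$ for $i\in I$, $t\in\{1,\dots,C-c_i(B)\}$, with $\overline{x}(i)=\sum_{t=1}^{C-c_i(B)}x(i,t)$; maximize $F(\overline{x})$ subject to $\overline{x}(i)\le1$, $\overline{x}\in P_{\mathcal{I}^{out}}$, and for all $t\in\{1,\dots,C\}$: $\sum_{i\in I}\mathbb{E}[\min\{c_i(\Phi(i)),t\}]\sum_{t'=1}^{t}x(i,t')\le 2t$. Let $y$ be the solution of P1 computed by the stochastic continuous greedy algorithm of Asadpour and Nazerzadeh (2016) with stopping time $l=\min\{\beta,1/4\}$ and step size $\delta=o(n^{-3})$, with $\overline{y}(i)=\sum_t y(i,t)$. Distribution $h$: the random vector $v\in[0;B]^I$ has independent coordinates with $\Pr[v(i)=j]=p_i(j)\overline{y}(i)$ for $j\in[B]$ and $\Pr[v(i)=0]=1-\overline{y}(i)$. Let $R(v)=\{i: v(i)\ne0\}$. Mapping $\psi^b$: for each $i\in R(v)$ independently sample a starting time $t(i)\in\{1,\dots,C-c_i(B)\}$ with $\Pr[t(i)=t]=y(i,t)/\overline{y}(i)$. Set $\psi^b(v)(i)=0$ for $i\notin R(v)$; for $i\in R(v)$ set $\psi^b(v)(i)=v(i)$ if $\sum_{i'\in R(v)\setminus\{i\},\ t(i')\le t(i)}c_{i'}(v(i'))\le t(i)$, and $\psi^b(v)(i)=0$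 otherwise. An $\alpha$-CRS with regards to $h$ is a (possibly randomized) mapping $\psi$ on $[0;B]^I$ with $\psi(v)(i)\in\{0,v(i)\}$ for all $i$, and $\Pr[\psi(v)(i)=j\mid v(i)=j]\ge\alpha$ for all $i\in I$, $j\in[B]$ (probability over $v\sim h$ and the randomness of $\psi$). It is monotone if for all $u,w$ with $u(i)=w(i)$ and $u\le w$, $\Pr[\psi(u)(i)=u(i)]\ge\Pr[\psi(w)(i)=w(i)]$ (probability over the randomness of $\psi$ only). *)

From mathcomp Require Import all_boot all_order all_algebra.
Set Implicit Arguments. Unset Strict Implicit. Unset Printing Implicit Defensive.
Import Order.TTheory GRing.Theory Num.Theory.
Local Open Scope ring_scope.

(* Items: 'I_n.  States [0;B]: 'I_B.+1 (state 0 = "absent").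
   Times {0,...,C}: 'I_C.+1 ; the LP variables x(i,t) live on t in
   {1,...,C - c_i(B)} and are represented as zero elsewhere. *)

Section Defs.
Variables (R : realFieldType) (n B C : nat).

Definition vec := {ffun 'I_n -> 'I_B.+1}.
Definition times := {ffun 'I_n -> 'I_C.+1}.

Definition xbar (x : 'I_n -> 'I_C.+1 -> R) (i : 'I_n) : R :=
  \sum_(t < C.+1) x i t.

Definition Emin (p : 'I_n -> 'I_B.+1 -> R) (c : 'I_n -> 'I_B.+1 -> nat)
  (i : 'I_n) (t : nat) : R :=
  \sum_(s < B.+1 | (0 < s)%N) p i s * (minn (c i s) t)%:R.

Definition in_conv (Iout : {set {set 'I_n}}) (z : 'I_n -> R) : Prop :=
  exists lam : {set 'I_n} -> R,
    [/\ forall S, 0 <= lam S,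
        \sum_S lam S = 1,
        forall S, lam S != 0 -> S \in Iout &
        forall i, z i = \sum_S lam S * (i \in S)%:R].

Definition down_closed (Iout : {set {set 'I_n}}) : Prop :=
  forall S T : {set 'I_n}, T \subset S -> S \in Iout -> T \in Iout.

Definition in_P1 (p : 'I_n -> 'I_B.+1 -> R) (c : 'I_n -> 'I_B.+1 -> nat)
  (Iout : {set {set 'I_n}}) (x : 'I_n -> 'I_C.+1 -> R) : Prop :=
  [/\ forall i t, 0 <= x i t,
      forall i (t : 'I_C.+1),
        ((t : nat) == 0%N) || (C - c i ord_max < t)%N -> x i t = 0,
      forall i, xbar x i <= 1,
      in_conv Iout (xbar x) &
      forall t : nat, (1 <= t <= C)%N ->
        \sum_i Emin p c i t * (\sum_(t' < C.+1 | (t' <= t)%N) x i t')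
          <= 2 * t%:R].

Definition rprob (z : 'I_n -> R) (Rs : {set 'I_n}) : R :=
  \prod_i (if i \in Rs then z i else 1 - z i).

(* Monotone (beta,gamma)-balanced CRS for Iout; the (randomized) scheme is
   given by chi z Rs S = Pr[chi(Rs) = S] for the point z. *)
Definition balanced_CRS (Iout : {set {set 'I_n}}) (beta gamma : R) : Prop :=
  exists chi : ('I_n -> R) -> {set 'I_n} -> {set 'I_n} -> R,
    forall z : 'I_n -> R,
      (exists x, in_conv Iout x /\ forall i, z i = beta * x i) ->
      [/\ forall Rs S, 0 <= chi z Rs S,
          forall Rs, \sum_S chi z Rs S = 1,
          forall Rs S, chi z Rs S != 0 -> S \subset Rs /\ S \in Iout,
          (* Pr[i in chi(R) | i in R] >= gamma *)
          forall i, gamma * z i <=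
             \sum_Rs rprob z Rs * (i \in Rs)%:R *
                     (\sum_S chi z Rs S * (i \in S)%:R) &
          forall i (Rs Rs' : {set 'I_n}), i \in Rs -> Rs \subset Rs' ->
             \sum_S chi z Rs' S * (i \in S)%:R <=
             \sum_S chi z Rs S * (i \in S)%:R].

Definition hprob (p : 'I_n -> 'I_B.+1 -> R) (y : 'I_n -> 'I_C.+1 -> R)
  (v : vec) : R :=
  \prod_i (if (v i : nat) == 0%N then 1 - xbar y i else p i (v i) * xbar y i).

(* Distribution of the starting times given v: for i in R(v), t(i) = t with
   probability y(i,t)/ybar(i); items outside R(v) get the dummy time 0. *)
Definition tprob (y : 'I_n -> 'I_C.+1 -> R) (v : vec) (t : times) : R :=
  \prod_i (if (v i : nat) != 0%N then y i (t i) / xbar y i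
           else ((t i : nat) == 0%N)%:R).

Definition psib_det (c : 'I_n -> 'I_B.+1 -> nat) (v : vec) (t : times) : vec :=
  [ffun i => if ((v i : nat) != 0%N) &&
               (\sum_(i' | (i' != i) && ((v i' : nat) != 0%N) && (t i' <= t i)%N)
                   c i' (v i') <= t i)%N
             then v i else ord0].

(* psi^b as a randomized mapping: K v o = Pr[psi^b(v) = o] *)
Definition psib (c : 'I_n -> 'I_B.+1 -> nat) (y : 'I_n -> 'I_C.+1 -> R)
  (v o : vec) : R :=
  \sum_(t : times) tprob y v t * (psib_det c v t == o)%:R.

Definition is_CRS (h : vec -> R) (K : vec -> vec -> R) (alpha : R) : Prop :=
  [/\ forall v, h v != 0 -> (forall o, 0 <= K v o) /\ \sum_o K v o = 1,
      forall v o, K v o != 0 -> forall i, o i = ord0 \/ o i = v i &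
      (* Pr[psi(v)(i) = j | v(i) = j] >= alpha, written multiplicatively *)
      forall i (j : 'I_B.+1), (0 < j)%N ->
        alpha * (\sum_v h v * (v i == j)%:R) <=
        \sum_v \sum_o h v * K v o * ((o i == j) && (v i == j))%:R].

Definition monotone_CRS (K : vec -> vec -> R) : Prop :=
  forall (u w : vec) (i : 'I_n),
    (forall k, (u k <= w k)%N) -> u i = w i ->
    \sum_o K w o * (o i == w i)%:R <= \sum_o K u o * (o i == u i)%:R.

End Defs.

From mathcomp Require Import all_boot all_order all_algebra.
From mathcomp Require Import ring lra zify.
Set Implicit Arguments. Unset Strict Implicit. Unset Printing Implicit Defensive.
Import Order.TTheory GRing.Theory Num.Theory.
Local Open Scope ring_scope.

(* The pairs (v(k), t(k)) are independent across items, with law [jointp k].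
   An item i drawn in state j with start time tau > 0 is dropped only if the
   other drawn items starting no later than tau cost more than tau in total;
   as min(., tau) is subadditive, their costs truncated at tau then sum to at
   least tau.  Dividing by tau and taking expectations, pairwise independence
   bounds the probability of dropping i by
   (1/tau) sum_k E[min(c_k(Phi(k)), tau)] sum_(t' <= tau) y(k, t'),
   which is at most 2 min(beta, 1/4) since y is min(beta, 1/4) times a point
   of P1.  Monotonicity is a coupling: run u <= w with the same start times.
   Costs grow with the state, so i survives in u whenever it survives in w,
   and the start times of the items outside the support of u are irrelevant. *)

Section ProductWeights.
Variables (R : realFieldType) (I J : finType) (w : I -> J -> R).

Lemma sum_mul_pred1 (T : finType) (g : T -> R) (a : T) :
  \sum_b g b * (b == a)%:R = g a.
Proof.
rewrite (bigD1 a) //= eqxx mulr1 big1 ?addr0 // => b /negbTE ->.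
by rewrite mulr0.
Qed.

Lemma prod_if_pred1 (F : I -> R) i :
  \prod_k (if k == i then F k else 1) = F i.
Proof. by rewrite -big_mkcond big_pred1_eq. Qed.

Lemma prod_if_pred2 (F G : I -> R) i i' : i != i' ->
  \prod_k (if k == i then F k else if k == i' then G k else 1) = F i * G i'.
Proof.
move=> neq_ii'; have neq_i'i : i' != i by rewrite eq_sym.
rewrite (bigD1 i) //= eqxx (bigD1 i') //= (negbTE neq_i'i) eqxx.
rewrite big1 ?mulr1 // => k /andP[].
by move=> /negbTE -> /negbTE ->.
Qed.

Lemma expect_prod (G : I -> J -> R) :
  \sum_(f : {ffun I -> J}) (\prod_k w k (f k)) * \prod_k G k (f k) =
  \prod_k \sum_a w k a * G k a.
Proof. by rewrite bigA_distr_bigA; apply: eq_bigr => f _; rewrite big_split. Qed.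

Lemma expect_restrict (S : {set I}) (d : J) (F : {ffun I -> J} -> R) :
  (forall k, k \notin S -> \sum_a w k a = 1) ->
  (forall f g : {ffun I -> J}, (forall k, k \in S -> f k = g k) -> F f = F g) ->
  \sum_(f : {ffun I -> J}) (\prod_k w k (f k)) * F f =
  \sum_(f : {ffun I -> J})
    (\prod_k (if k \in S then w k (f k) else (f k == d)%:R)) * F f.
Proof.
move=> w_sum1 F_local.
pose ind (g : {ffun I -> J}) k (a : J) : R :=
  if k \in S then (a == g k)%:R else (g k == d)%:R.
have F_ind f : F f = \sum_g F g * \prod_k ind g k (f k).
  pose rf := [ffun k => if k \in S then f k else d].
  have ind_rf : \prod_k ind rf k (f k) = 1.
    by apply: big1 => k _; rewrite /ind ffunE; case: (k \in S); rewrite eqxx.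
  rewrite (bigD1 rf) //= ind_rf mulr1 [X in _ + X]big1 ?addr0 => [|g neq_g].
    by apply: F_local => k kS; rewrite ffunE kS.
  have [k neq_k] : exists k, g k != rf k.
    apply/existsP; apply: contraR neq_g => /existsPn eq_g.
    by apply/eqP/ffunP => k; apply/eqP; rewrite -[_ == _]negbK eq_g.
  rewrite (bigD1 k) //= /ind; move: neq_k; rewrite ffunE.
  by case: ifP => _ /negbTE; rewrite 1?eq_sym => ->; rewrite mul0r mulr0.
under eq_bigr => f _ do rewrite F_ind mulr_sumr.
rewrite exchange_big /=; apply: eq_bigr => g _.
under eq_bigr => f _ do rewrite mulrCA.
rewrite -mulr_sumr expect_prod mulrC; congr (_ * _); apply: eq_bigr => k _.
rewrite /ind; case: ifP => kS; first by rewrite sum_mul_pred1.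
by rewrite -mulr_suml w_sum1 ?kS ?mul1r.
Qed.

Hypothesis w_sum1 : forall k, \sum_a w k a = 1.

Lemma expect_coord (G : J -> R) i :
  \sum_(f : {ffun I -> J}) (\prod_k w k (f k)) * G (f i) = \sum_a w i a * G a.
Proof.
have G_prod f : G (f i) = \prod_k (if k == i then G (f k) else 1).
  by rewrite (prod_if_pred1 (fun k => G (f k))).
under eq_bigr => f _ do rewrite G_prod.
rewrite (expect_prod (fun k a => if k == i then G a else 1)).
rewrite -[RHS](prod_if_pred1 (fun k => \sum_a w k a * G a) i).
by apply: eq_bigr => k _; case: eqP => // _; under eq_bigr do rewrite mulr1.
Qed.

Lemma expect_coord2 (G : J -> J -> R) i i' : i != i' ->
  \sum_(f : {ffun I -> J}) (\prod_k w k (f k)) * G (f i) (f i') =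
  \sum_a \sum_b w i a * w i' b * G a b.
Proof.
move=> neq_ii'.
pose e (a b : J) (k : I) (x : J) : R :=
  if k == i then (x == a)%:R else if k == i' then (x == b)%:R else 1.
have G_sum (f : {ffun I -> J}) :
    G (f i) (f i') = \sum_a \sum_b G a b * \prod_k e a b k (f k).
  under eq_bigr => a _ do under eq_bigr => b _ do
    rewrite (prod_if_pred2 (fun k => (f k == a)%:R) (fun k => (f k == b)%:R) neq_ii').
  rewrite -(sum_mul_pred1 (fun a => G a (f i')) (f i)); apply: eq_bigr => a _.
  rewrite -(sum_mul_pred1 (G a) (f i')) mulr_suml; apply: eq_bigr => b _.
  by rewrite (eq_sym a) (eq_sym b) mulrA mulrAC.
under eq_bigr => f _ do rewrite G_sum mulr_sumr.
rewrite exchange_big /=; apply: eq_bigr => a _.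
under eq_bigr => f _ do rewrite mulr_sumr.
rewrite exchange_big /=; apply: eq_bigr => b _.
under eq_bigr => f _ do rewrite mulrCA.
rewrite -mulr_sumr expect_prod mulrC; congr (_ * _).
rewrite -(prod_if_pred2 (fun k => w k a) (fun k => w k b) neq_ii').
apply: eq_bigr => k _; rewrite /e.
case: eqP => _; first by rewrite sum_mul_pred1.
case: eqP => _; first by rewrite sum_mul_pred1.
by under eq_bigr do rewrite mulr1.
Qed.

End ProductWeights.

Lemma sum_ffun_pair (R : realFieldType) (I J1 J2 : finType)
    (F : {ffun I -> J1} -> {ffun I -> J2} -> R) :
  \sum_(f1 : {ffun I -> J1}) \sum_(f2 : {ffun I -> J2}) F f1 f2 =
  \sum_(f : {ffun I -> J1 * J2}) F [ffun k => (f k).1] [ffun k => (f k).2].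
Proof.
rewrite pair_bigA /=.
pose split (f : {ffun I -> J1 * J2}) := ([ffun k => (f k).1], [ffun k => (f k).2]).
pose join (f12 : {ffun I -> J1} * {ffun I -> J2}) := [ffun k => (f12.1 k, f12.2 k)].
rewrite (reindex split) //; apply: onW_bij; exists join => [f|[f1 f2]].
  by apply/ffunP => k; rewrite !ffunE -surjective_pairing.
by congr (_, _); apply/ffunP => k; rewrite !ffunE.
Qed.

Section StartingTimes.
Variables (R : realFieldType) (n B C : nat) (y : 'I_n -> 'I_C.+1 -> R).
Hypothesis y_ge0 : forall k t, 0 <= y k t.

Definition tdist (v : vec n B) k (t : 'I_C.+1) : R :=
  if (v k : nat) != 0%N then y k t / xbar y k else ((t : nat) == 0%N)%:R.

Lemma tprobE (v : vec n B) t : tprob y v t = \prod_k tdist v k (t k).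
Proof. by []. Qed.

Lemma xbar_ge0 k : 0 <= xbar y k.
Proof. exact: sumr_ge0. Qed.

Lemma tdist_ge0 (v : vec n B) k t : 0 <= tdist v k t.
Proof. by rewrite /tdist; case: ifP; rewrite ?divr_ge0 ?ler0n ?xbar_ge0. Qed.

Lemma tprob_ge0 (v : vec n B) t : 0 <= tprob y v t.
Proof. by apply: prodr_ge0 => k _; apply: tdist_ge0. Qed.

Lemma sum_tdist (v : vec n B) k : ((v k : nat) != 0%N -> xbar y k != 0) ->
  \sum_t tdist v k t = 1.
Proof.
rewrite /tdist; case: ((v k : nat) != 0%N) => [/(_ isT) xbar_neq0|_].
  by rewrite -mulr_suml divff.
by rewrite big_ord_recl /= big1 ?addr0.
Qed.

Lemma sum_tprob (v : vec n B) : (forall k, (v k : nat) != 0%N -> xbar y k != 0) ->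
  \sum_t tprob y v t = 1.
Proof.
move=> xbar_neq0; rewrite -(bigA_distr_bigA (fun k => tdist v k)).
by apply: big1 => k _; apply: sum_tdist; apply: xbar_neq0.
Qed.

Lemma tprob_eq0 (v : vec n B) t k :
  (v k : nat) != 0%N -> xbar y k = 0 -> tprob y v t = 0.
Proof.
move=> vk_neq0 xbar0.
by rewrite tprobE (bigD1 k) //= /tdist vk_neq0 xbar0 invr0 mulr0 mul0r.
Qed.

End StartingTimes.

Lemma minn_sum_leq (I : finType) (P : pred I) (a : I -> nat) m :
  (minn (\sum_(k | P k) a k) m <= \sum_(k | P k) minn (a k) m)%N.
Proof.
apply: (big_ind2 (fun s s' => minn s m <= s')%N) => // [|s1 s1' s2 s2' le1 le2].
  by rewrite min0n.
by apply: leq_trans (leq_add le1 le2); lia.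
Qed.

Section Psib.
Variables (R : realFieldType) (n B C : nat).
Variables (p : 'I_n -> 'I_B.+1 -> R) (c : 'I_n -> 'I_B.+1 -> nat).
Variable y : 'I_n -> 'I_C.+1 -> R.
Hypothesis y_ge0 : forall k t, 0 <= y k t.

Lemma psibE (v : vec n B) (X : vec n B -> R) :
  \sum_o psib c y v o * X o = \sum_t tprob y v t * X (psib_det c v t).
Proof.
under eq_bigr => o _ do rewrite mulr_suml.
rewrite exchange_big /=; apply: eq_bigr => t _.
rewrite (bigD1 (psib_det c v t)) //= eqxx mulr1 big1 ?addr0 // => o.
by rewrite eq_sym => /negbTE ->; rewrite mulr0 mul0r.
Qed.

Lemma psib_ge0 (v o : vec n B) : 0 <= psib c y v o.
Proof. by apply: sumr_ge0 => t _; rewrite mulr_ge0 ?ler0n ?tprob_ge0. Qed.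

Lemma psib_det_cases (v : vec n B) (t : times n C) i :
  psib_det c v t i = ord0 \/ psib_det c v t i = v i.
Proof. by rewrite ffunE; case: ifP; [right|left]. Qed.

Lemma psib_support (v o : vec n B) :
  psib c y v o != 0 -> exists t : times n C, psib_det c v t = o.
Proof.
move=> psib_neq0.
have /existsP[t /eqP <-] : [exists t : times n C, psib_det c v t == o].
  apply: contraR psib_neq0 => /existsPn no_t.
  by apply/eqP/big1 => t _; rewrite (negbTE (no_t t)) mulr0.
by exists t.
Qed.

Lemma hprob_xbar_neq0 (v : vec n B) k :
  hprob p y v != 0 -> (v k : nat) != 0%N -> xbar y k != 0.
Proof.
move=> /prodf_neq0 /(_ k isT) hk_neq0 vk_neq0.
by move: hk_neq0; rewrite (negbTE vk_neq0) mulf_eq0 negb_or => /andP[].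
Qed.

Lemma sum_psib (v : vec n B) : hprob p y v != 0 -> \sum_o psib c y v o = 1.
Proof.
move=> hv_neq0.
transitivity (\sum_o psib c y v o * 1); first by apply: eq_bigr => o _; rewrite mulr1.
rewrite psibE; under eq_bigr do rewrite mulr1.
by apply: sum_tprob => // k; apply: hprob_xbar_neq0.
Qed.

Lemma hprob_sum_tprob (v : vec n B) :
  hprob p y v * \sum_t tprob y v t = hprob p y v.
Proof.
have [->|hv_neq0] := eqVneq (hprob p y v) 0; first by rewrite mul0r.
by rewrite sum_tprob ?mulr1 // => k; apply: hprob_xbar_neq0.
Qed.

Definition vpart (f : {ffun 'I_n -> 'I_B.+1 * 'I_C.+1}) : vec n B :=
  [ffun k => (f k).1].
Definition tpart (f : {ffun 'I_n -> 'I_B.+1 * 'I_C.+1}) : times n C :=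
  [ffun k => (f k).2].

Lemma vpartE f k : vpart f k = (f k).1. Proof. exact: ffunE. Qed.
Lemma tpartE f k : tpart f k = (f k).2. Proof. exact: ffunE. Qed.

Definition jointp k (a : 'I_B.+1 * 'I_C.+1) : R :=
  if (a.1 : nat) == 0%N then (1 - xbar y k) * ((a.2 : nat) == 0%N)%:R
  else p k a.1 * y k a.2.

Definition jointprob (f : {ffun 'I_n -> 'I_B.+1 * 'I_C.+1}) : R :=
  \prod_k jointp k (f k).

Lemma hprob_tprob (v : vec n B) (t : times n C) :
  hprob p y v * tprob y v t = \prod_k jointp k (v k, t k).
Proof.
rewrite /hprob tprobE -big_split; apply: eq_bigr => k _.
rewrite /jointp /tdist /=; case: ifP => //= _.
have [xbar0|xbar_neq0] := eqVneq (xbar y k) 0.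
  by rewrite (psumr_eq0P (fun t _ => y_ge0 k t) xbar0) // xbar0 !(mulr0, mul0r).
by field.
Qed.

Lemma sum_hprob_tprob (F : vec n B -> times n C -> R) :
  \sum_v \sum_t hprob p y v * tprob y v t * F v t =
  \sum_f jointprob f * F (vpart f) (tpart f).
Proof.
rewrite sum_ffun_pair; apply: eq_bigr => f _; rewrite hprob_tprob.
by congr (_ * _); apply: eq_bigr => k _; rewrite vpartE tpartE -surjective_pairing.
Qed.

Lemma sum_hprob (X : vec n B -> R) :
  \sum_v hprob p y v * X v = \sum_f jointprob f * X (vpart f).
Proof.
transitivity (\sum_v \sum_t hprob p y v * tprob y v t * X v).
  by apply: eq_bigr => v _; rewrite -mulr_suml -mulr_sumr hprob_sum_tprob.
exact: sum_hprob_tprob.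
Qed.

Lemma sum_hprob_psib (X : vec n B -> vec n B -> R) :
  \sum_v \sum_o hprob p y v * psib c y v o * X v o =
  \sum_f jointprob f * X (vpart f) (psib_det c (vpart f) (tpart f)).
Proof.
transitivity (\sum_v \sum_t hprob p y v * tprob y v t * X v (psib_det c v t)).
  apply: eq_bigr => v _; under eq_bigr do rewrite -mulrA.
  by rewrite -mulr_sumr psibE mulr_sumr; under eq_bigr do rewrite mulrA.
exact: sum_hprob_tprob.
Qed.

Hypothesis p_ge0 : forall k (s : 'I_B.+1), (0 < s)%N -> 0 <= p k s.
Hypothesis p_sum1 : forall k, \sum_(s < B.+1 | (0 < s)%N) p k s = 1.
Hypothesis xbar_le1 : forall k, xbar y k <= 1.

Lemma jointp_ge0 k a : 0 <= jointp k a.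
Proof.
rewrite /jointp; case: ifP => [_|/negbT a1_neq0].
  by rewrite mulr_ge0 ?ler0n // subr_ge0.
by rewrite mulr_ge0 ?p_ge0 ?lt0n.
Qed.

Lemma sum_jointp k : \sum_a jointp k a = 1.
Proof.
have p_lift_sum1 : \sum_(s < B) p k (lift ord0 s) = 1.
  by rewrite -(p_sum1 k) [RHS]big_mkcond big_ord_recl /= add0r.
rewrite -(pair_bigA _ (fun s t => jointp k (s, t))) big_ord_recl /= /jointp /=.
rewrite -mulr_sumr big_ord_recl /= big1 ?addr0 // mulr1.
under eq_bigr do rewrite -mulr_sumr -/(xbar y k).
by rewrite -mulr_suml p_lift_sum1 mul1r subrK.
Qed.

Definition load k (tau : nat) (b : 'I_B.+1 * 'I_C.+1) : R :=
  ((((b.1 : nat) != 0%N) && (b.2 <= tau)%N)%:R * (minn (c k b.1) tau)%:R) / tau%:R.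

Lemma load_ge0 k tau b : 0 <= load k tau b.
Proof. by rewrite /load divr_ge0 ?mulr_ge0 ?ler0n. Qed.

Lemma blocked_load (v : vec n B) (t : times n C) i :
  (0 < t i)%N -> psib_det c v t i != v i ->
  1 <= \sum_(k | k != i) load k (t i) (v k, t k).
Proof.
move=> t_pos not_kept.
have vi_neq0 : (v i : nat) != 0%N.
  move: (not_kept); case: (psib_det_cases v t i) => ->; last by rewrite eqxx.
  rewrite eq_sym.
  by apply: contra => /eqP vi0; apply/eqP/val_inj.
set P := fun k => (k != i) && ((v k : nat) != 0%N) && (t k <= t i)%N.
have blocked : (t i < \sum_(k | P k) c k (v k))%N.
  by move: not_kept; rewrite ffunE vi_neq0 /=; case: leqP; rewrite ?eqxx.
have -> : \sum_(k | k != i) load k (t i) (v k, t k) =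
    (\sum_(k | P k) minn (c k (v k)) (t i))%:R / (t i)%:R.
  rewrite natr_sum mulr_suml [LHS]big_mkcond [RHS]big_mkcond; apply: eq_bigr => k _.
  rewrite /P /load /=; case: (k != i); case: ((v k : nat) != 0%N);
    by case: (t k <= t i)%N; rewrite /= ?mul1r ?mul0r.
rewrite ler_pdivlMr ?ltr0n // mul1r ler_nat.
by apply: leq_trans (minn_sum_leq _ _ _); rewrite (minn_idPr (ltnW blocked)).
Qed.

Lemma expected_load k tau :
  \sum_b jointp k b * load k tau b =
  Emin p c k tau * (\sum_(t < C.+1 | (t <= tau)%N) y k t) / tau%:R.
Proof.
rewrite -(pair_bigA _ (fun s t => jointp k (s, t) * load k tau (s, t))).
rewrite big_ord_recl /=.
rewrite big1 ?add0r => [|t _]; last by rewrite /load /= !mul0r mulr0.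
rewrite /Emin [in RHS]big_mkcond big_ord_recl /= add0r !mulr_suml.
apply: eq_bigr => s _; rewrite [in RHS]big_mkcond mulr_sumr mulr_suml.
apply: eq_bigr => t _; rewrite /jointp /load /=.
by case: (t <= tau)%N => /=; ring.
Qed.

Hypothesis y_at0 : forall k, y k ord0 = 0.

Lemma jointp_time_pos k (b : 'I_B.+1 * 'I_C.+1) :
  (b.1 : nat) != 0%N -> jointp k b != 0 -> (0 < b.2)%N.
Proof.
move=> b1_neq0; rewrite lt0n; apply: contra => /eqP b2_eq0.
rewrite /jointp (negbTE b1_neq0) (_ : b.2 = ord0) ?y_at0 ?mulr0 //.
exact: val_inj.
Qed.

Variable a : R.
Hypothesis load_le : forall tau, (1 <= tau <= C)%N ->
  \sum_k Emin p c k tau * (\sum_(t < C.+1 | (t <= tau)%N) y k t) <= a * tau%:R.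

Lemma expected_total_load i (tau : 'I_C.+1) : (0 < tau)%N ->
  \sum_(k | k != i) \sum_b jointp k b * load k tau b <= a.
Proof.
move=> tau_pos.
have load_i_ge0 : 0 <= \sum_b jointp i b * load i tau b.
  by apply: sumr_ge0 => b _; rewrite mulr_ge0 ?jointp_ge0 ?load_ge0.
apply: le_trans (_ : \sum_k \sum_b jointp k b * load k tau b <= a).
  by rewrite [X in _ <= X](bigD1 i) //= lerDr.
under eq_bigr do rewrite expected_load.
rewrite -mulr_suml ler_pdivrMr ?ltr0n //; apply: load_le.
by rewrite tau_pos -ltnS ltn_ord.
Qed.

Lemma blocked_prob_le i (j : 'I_B.+1) : (0 < j)%N ->
  \sum_f jointprob f * ((psib_det c (vpart f) (tpart f) i != j) && ((f i).1 == j))%:R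
  <= a * \sum_f jointprob f * ((f i).1 == j)%:R.
Proof.
rewrite /jointprob => j_pos; have j_neq0 : (j : nat) != 0%N by rewrite -lt0n.
pose G k (b b' : 'I_B.+1 * 'I_C.+1) : R := (b.1 == j)%:R * load k b.2 b'.
have pointwise (f : {ffun 'I_n -> 'I_B.+1 * 'I_C.+1}) :
    (\prod_k jointp k (f k)) *
      ((psib_det c (vpart f) (tpart f) i != j) && ((f i).1 == j))%:R
    <= (\prod_k jointp k (f k)) * \sum_(k | k != i) G k (f i) (f k).
  have [->|W_neq0] := eqVneq (\prod_k jointp k (f k)) 0; first by rewrite !mul0r.
  apply: ler_wpM2l; first by apply: prodr_ge0 => k _; apply: jointp_ge0.
  case: andP => [[not_kept /eqP fi_j]|_]; last first.
    by apply: sumr_ge0 => k _; rewrite mulr_ge0 ?ler0n ?load_ge0.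
  have t_pos : (0 < (f i).2)%N.
    by apply: jointp_time_pos; [rewrite fi_j | move/prodf_neq0: W_neq0; apply].
  under eq_bigr => k _ do rewrite /G fi_j eqxx mul1r.
  have blocked := @blocked_load (vpart f) (tpart f) i.
  rewrite [vpart f i]vpartE [tpart f i]tpartE fi_j in blocked.
  apply: le_trans (blocked t_pos not_kept) _.
  rewrite (eq_bigr (fun k => load k (f i).2 (f k))) // => k _.
  by rewrite [vpart f k]vpartE [tpart f k]tpartE -surjective_pairing.
apply: le_trans (ler_sum _ (fun f _ => pointwise f)) _.
under eq_bigr => f _ do rewrite mulr_sumr.
rewrite exchange_big /=.
rewrite (eq_bigr (fun k => \sum_b \sum_b' jointp i b * jointp k b' * G k b b'));
  last first.
  by move=> k k_neq_i; apply: expect_coord2; [exact: sum_jointp | rewrite eq_sym].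
rewrite exchange_big /= (expect_coord sum_jointp (fun b => (b.1 == j)%:R)) mulr_sumr.
apply: ler_sum => b _.
have -> : \sum_(k | k != i) \sum_b' jointp i b * jointp k b' * G k b b' =
    jointp i b * (b.1 == j)%:R *
      \sum_(k | k != i) \sum_b' jointp k b' * load k b.2 b'.
  rewrite mulr_sumr; apply: eq_bigr => k _; rewrite mulr_sumr.
  by apply: eq_bigr => b' _; rewrite /G; ring.
rewrite mulrC; case: eqP => [b1_j|_]; last by rewrite mulr0n !mulr0.
have [->|jb_neq0] := eqVneq (jointp i b) 0; first by rewrite !(mul0r, mulr0).
rewrite ler_wpM2r ?mulr_ge0 ?jointp_ge0 ?ler0n //.
by apply: expected_total_load; apply: jointp_time_pos jb_neq0; rewrite b1_j.
Qed.

Theorem psib_is_CRS : is_CRS (hprob p y) (psib c y) (1 - a).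
Proof.
split.
- by move=> v hv_neq0; split; [exact: psib_ge0 | exact: sum_psib].
- by move=> v o /psib_support [t <-] k; apply: psib_det_cases.
move=> i j j_pos; rewrite sum_hprob sum_hprob_psib.
under eq_bigr => f _ do rewrite [vpart f i]vpartE.
under [X in _ <= X]eq_bigr => f _ do rewrite [vpart f i]vpartE.
have := blocked_prob_le i j_pos.
have -> : \sum_f jointprob f * ((f i).1 == j)%:R =
    \sum_f jointprob f *
      ((psib_det c (vpart f) (tpart f) i == j) && ((f i).1 == j))%:R +
    \sum_f jointprob f *
      ((psib_det c (vpart f) (tpart f) i != j) && ((f i).1 == j))%:R.
  rewrite -big_split /=; apply: eq_bigr => f _; rewrite -mulrDr.
  by case: (_ == j); case: (_ == j); rewrite /= ?(mulr0n, addr0, add0r).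
nra.
Qed.

End Psib.

Section Monotone.
Variables (R : realFieldType) (n B C : nat).
Variables (c : 'I_n -> 'I_B.+1 -> nat) (y : 'I_n -> 'I_C.+1 -> R).
Hypothesis y_ge0 : forall k t, 0 <= y k t.
Hypothesis c_mono : forall k (s s' : 'I_B.+1),
  (0 < s')%N -> (s' <= s)%N -> (c k s' <= c k s)%N.

Lemma psib_det_mono (u w : vec n B) (t : times n C) i :
  (forall k, (u k <= w k)%N) -> u i = w i ->
  psib_det c w t i == w i -> psib_det c u t i == u i.
Proof.
move=> le_uw eq_i; rewrite !ffunE -eq_i.
have [ui0|ui_neq0] := eqVneq (u i : nat) 0%N.
  by move=> _; apply/eqP/val_inj; rewrite /= ui0.
have load_le :
    (\sum_(k | (k != i) && ((u k : nat) != 0%N) && (t k <= t i)%N) c k (u k)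
     <= \sum_(k | (k != i) && ((w k : nat) != 0%N) && (t k <= t i)%N) c k (w k))%N.
  rewrite big_mkcond [X in (_ <= X)%N]big_mkcond /=; apply: leq_sum => k _.
  case: ifP => // /andP[/andP[k_neq_i uk_neq0] tk_le].
  have uk_pos : (0 < u k)%N by rewrite lt0n.
  have wk_neq0 : (w k : nat) != 0%N by rewrite -lt0n (leq_trans uk_pos).
  by rewrite k_neq_i wk_neq0 tk_le /=; apply: c_mono.
rewrite /=; case: ifP => [le_w _|_ /eqP ord0_u].
  by rewrite (leq_trans load_le le_w).
by move: ui_neq0; rewrite -ord0_u.
Qed.

Lemma psib_det_local (u : vec n B) (t t' : times n C) i :
  (forall k, (u k : nat) != 0%N -> t k = t' k) ->
  psib_det c u t i = psib_det c u t' i.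
Proof.
move=> eq_t; rewrite !ffunE.
have [//|ui_neq0] := eqVneq (u i : nat) 0%N.
rewrite (eq_t i ui_neq0); congr (if _ && (_ <= _)%N then _ else _).
apply: eq_bigl => k; have [_|uk_neq0] := eqVneq (u k : nat) 0%N.
  by rewrite !andbF.
by rewrite eq_t.
Qed.

Lemma sum_tprob_restrict (u w : vec n B) (F : times n C -> R) :
  (forall k, (u k : nat) != 0%N -> (w k : nat) != 0%N) ->
  (forall k, (w k : nat) != 0%N -> xbar y k != 0) ->
  (forall t t' : times n C,
     (forall k, (u k : nat) != 0%N -> t k = t' k) -> F t = F t') ->
  \sum_t tprob y w t * F t = \sum_t tprob y u t * F t.
Proof.
move=> supp_uw xbar_neq0 F_local.
pose S := [set k | (u k : nat) != 0%N].
have F_S (t t' : times n C) : (forall k, k \in S -> t k = t' k) -> F t = F t'.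
  by move=> eq_t; apply: F_local => k uk_neq0; apply: eq_t; rewrite inE.
under eq_bigr do rewrite tprobE; under [RHS]eq_bigr do rewrite tprobE.
rewrite (expect_restrict ord0 _ F_S) => [|k _]; last first.
  by apply: sum_tdist => /xbar_neq0.
rewrite [RHS](expect_restrict ord0 _ F_S) => [|k]; last first.
  by rewrite inE => /negbTE uk0; apply: sum_tdist; rewrite uk0.
apply: eq_bigr => t _; congr (_ * _); apply: eq_bigr => k _.
by case: ifP => //; rewrite inE /tdist => uk_neq0; rewrite uk_neq0 supp_uw.
Qed.

Theorem psib_monotone : monotone_CRS (psib c y).
Proof.
move=> u w i le_uw eq_i; rewrite !psibE.
have supp_uw k : (u k : nat) != 0%N -> (w k : nat) != 0%N.
  by rewrite -!lt0n => /leq_trans; apply.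
(* A drawn item with [xbar y k = 0] gets start-time weights [y k t / 0 = 0],
   so that [psib c y w] has total mass 0. *)
case: (boolP [exists k, ((w k : nat) != 0%N) && (xbar y k == 0)]).
  case/existsP => k /andP[wk_neq0 /eqP xbar0].
  rewrite big1 => [|t _]; last by rewrite (tprob_eq0 t wk_neq0 xbar0) mul0r.
  by apply: sumr_ge0 => t _; rewrite mulr_ge0 ?ler0n ?tprob_ge0.
move/existsPn => no_null.
apply: le_trans (_ : _ <= \sum_t tprob y w t * (psib_det c u t i == u i)%:R) _.
  apply: ler_sum => t _; apply: ler_wpM2l; first exact: tprob_ge0.
  move: (psib_det_mono (t := t) le_uw eq_i).
  by case: (psib_det c w t i == w i) => [/(_ isT) ->|_]; rewrite ler_nat.
rewrite (sum_tprob_restrict supp_uw) // => [k wk_neq0|t t' eq_t].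
  by move: (no_null k); rewrite wk_neq0.
by rewrite (psib_det_local i eq_t).
Qed.

End Monotone.

Theorem lemma4 (R : realFieldType) (n B C : nat)
  (p : 'I_n -> 'I_B.+1 -> R) (c : 'I_n -> 'I_B.+1 -> nat)
  (Iout : {set {set 'I_n}}) (beta gamma : R)
  (y : 'I_n -> 'I_C.+1 -> R) :
  (0 < B)%N -> (0 < C)%N ->
  (forall i (s : 'I_B.+1), (0 < s)%N -> 0 <= p i s) ->
  (forall i, \sum_(s < B.+1 | (0 < s)%N) p i s = 1) ->
  (forall i (s s' : 'I_B.+1), (0 < s')%N -> (s' <= s)%N -> (c i s' <= c i s)%N) ->
  down_closed Iout ->
  0 <= beta <= 1 -> 0 <= gamma <= 1 ->
  balanced_CRS Iout beta gamma ->
  (* y is the output of stochastic continuous greedy with stopping time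
     l = min{beta, 1/4}: y lies in l times the feasible region of P1 *)
  (exists x, in_P1 p c Iout x /\
     forall i t, y i t = Num.min beta (1 / 4) * x i t) ->
  is_CRS (hprob p y) (psib c y) (1 - Num.min (2 * beta) (1 / 2)) /\
  monotone_CRS (psib c y).
Proof.
move=> _ _ p_ge0 p_sum1 c_mono _ /andP[beta_ge0 _] _ _.
move=> [x [[x_ge0 x_out xbar_x_le1 _ x_load] y_def]].
set l := Num.min beta (1 / 4).
have l_ge0 : 0 <= l by rewrite le_min beta_ge0 /=; lra.
have l_le : l <= 1 / 4 by rewrite ge_min lexx orbT.
have y_ge0 k t : 0 <= y k t by rewrite y_def mulr_ge0.
have xbar_y k : xbar y k = l * xbar x k.
  by rewrite /xbar mulr_sumr; apply: eq_bigr => t _.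
split; last exact: psib_monotone.
have -> : Num.min (2 * beta) (1 / 2) = 2 * l.
  by rewrite /l minr_pMr //; congr Num.min; lra.
apply: psib_is_CRS => // [k|k|tau tau_range].
- have xbar_x_ge0 : 0 <= xbar x k by apply: sumr_ge0.
  by rewrite xbar_y; have := xbar_x_le1 k; nra.
- by rewrite y_def x_out ?mulr0.
under eq_bigr do under eq_bigr do rewrite y_def.
under eq_bigr do rewrite -mulr_sumr mulrCA.
by rewrite -mulr_sumr (mulrC 2) -mulrA ler_wpM2l // x_load.
Qed.
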